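(* Let $\mathcal P$ be the set of real polynomials $P\in\mathbb R[X]$ with $\int_0^\infty P(t)e^{-2t}\,dt=1$, and let $\mathcal P_+=\{P\in\mathcal P: P(t)\ge0\ \forall t\ge0\}$. Then for $P\in\mathcal P_+$ the following are equivalent: (i) $P$ is an extreme point of the convex set $\mathcal P_+$; (ii) $P(t)=c\,t^k\prod_{i=1}^{\ell}(t-\lambda_i)^2$ for some $k,\ell\in\mathbb N$, $\lambda_i>0$ for all $i$, and a normalization constant $c>0$.
   Context: An extreme point of a convex set $\mathcal C$ is a point $a\in\mathcal C$ such that $a=\frac12(x+y)$ with $x,y\in\mathcal C$ implies $x=y=a$. *)

From HB Require Import structures.
From mathcomp Require Import all_boot all_order all_algebra.
From mathcomp Require Import all_classical all_reals all_analysis.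
Unset Strict Implicit. Unset Printing Implicit Defensive.
Import Order.TTheory GRing.Theory Num.Theory.
Local Open Scope classical_set_scope.
Local Open Scope ring_scope.

Definition laplace2 {R : realType} (P : {poly R}) : \bar R :=
  (\int[@lebesgue_measure R]_(t in `[0%R, +oo[) (P.[t] * expR (- (2 * t)))%:E)%E.

Arguments laplace2 {R} P.
Definition Pset (R : realType) : set {poly R} :=
  [set P | laplace2 P = 1%:E].

Definition Pplus (R : realType) : set {poly R} :=
  [set P | Pset R P /\ forall t : R, 0 <= t -> 0 <= P.[t]].

Definition extreme_point {R : realType} (C : set {poly R}) (a : {poly R}) : Prop :=
  C a /\ forall x y : {poly R}, C x -> C y -> a = 2^-1 *: (x + y) -> x = a /\ y = a.

From HB Require Import structures.
From mathcomp Require Import all_boot all_order all_algebra.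
From mathcomp Require Import all_classical all_reals all_analysis.
From mathcomp Require Import measurable_realfun polyrcf.
From mathcomp Require Import ring lra.
Import Order.TTheory GRing.Theory Num.Theory.
Local Open Scope ring_scope.
Import numFieldNormedType.Exports.

(* An extreme point P of P_+ is rigid: if P + D and P - D are both nonnegative
   on [0, +oo), then D is a multiple of P.  Indeed, after subtracting from D the
   multiple of P with the same integral, P is the midpoint of two elements of
   P_+.  Nonnegativity forces a root 0 of P to split off a factor 'X and a root
   l > 0 to split off ('X - l)^2; the quotient is again nonnegative and rigid,
   so these factors can be peeled off one by one.  What remains is positive on
   [0, +oo), hence bounded below by some m > 0; rigidity applied to D = m makes
   it constant.  Conversely, if P = c 'X^k prod ('X - l_i)^2 is the midpoint of
   x and y in P_+, then 0 <= x <= 2 P on [0, +oo), so the same factors divide x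
   and leave a bounded, hence constant, quotient, which the normalisation of
   the integral pins down: x = P. *)

Section HalflinePolynomials.
Set Implicit Arguments.
Unset Strict Implicit.
Local Open Scope classical_set_scope.
Variable R : realType.
Implicit Types (p q f g h x P D Q : {poly R}) (a b l t : R).

Definition halfline_nonneg p := forall t, 0 <= t -> 0 <= p.[t].

Lemma halfline_nonnegD p q :
  halfline_nonneg p -> halfline_nonneg q -> halfline_nonneg (p + q).
Proof. by move=> p_ge0 q_ge0 t t_ge0; rewrite hornerD addr_ge0 ?p_ge0 ?q_ge0. Qed.

Lemma halfline_nonnegZ a p : 0 <= a -> halfline_nonneg p -> halfline_nonneg (a *: p).
Proof. by move=> a_ge0 p_ge0 t t_ge0; rewrite hornerZ mulr_ge0 ?p_ge0. Qed.

Lemma horner_ge0_at_right p l : (\forall t \near l^'+, 0 <= p.[t]) -> 0 <= p.[l].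
Proof.
have pl : p.[t] @[t --> l^'+] --> p.[l] :=
  cvg_at_right_filter (@continuous_horner R p l).
by move=> /(limr_ge (cvgP _ pl)); rewrite (cvg_lim _ pl).
Qed.

Lemma horner_le0_at_left p l : (\forall t \near l^'-, p.[t] <= 0) -> p.[l] <= 0.
Proof.
have pl : p.[t] @[t --> l^'-] --> p.[l] :=
  cvg_at_left_filter (@continuous_horner R p l).
by move=> /(limr_le (cvgP _ pl)); rewrite (cvg_lim _ pl).
Qed.

Lemma halfline_nonneg_divr g q l : 0 <= l ->
    (forall t, 0 <= t -> t != l -> 0 < q.[t]) ->
  halfline_nonneg (g * q) -> halfline_nonneg g.
Proof.
move=> l_ge0 q_gt0 gq_ge0.
have g_ge0 t : 0 <= t -> t != l -> 0 <= g.[t].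
  by move=> t_ge0 tl; have := gq_ge0 t t_ge0; rewrite hornerM pmulr_lge0 ?q_gt0.
move=> t t_ge0; have [->|] := eqVneq t l; last exact: g_ge0.
apply: horner_ge0_at_right; near=> s.
have ls : l < s by near: s; exact: nbhs_right_gt.
by apply: g_ge0; [exact: le_trans (ltW ls) | rewrite gt_eqF].
Unshelve. all: by end_near.
Qed.

Lemma halfline_nonneg_lead_coef_gt0 p :
  halfline_nonneg p -> p != 0 -> 0 < lead_coef p.
Proof.
move=> p_ge0 p_neq0; rewrite lt_def lead_coef_eq0 p_neq0 /= leNgt; apply/negP.
move=> lc_lt0; have [n Hn] : exists n, forall t, n <= t -> lead_coef (- p) <= (- p).[t].
  by apply: poly_pinfty_gt_lc; rewrite lead_coefN oppr_gt0.
pose t := Num.max n 0.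
have := Hn t; rewrite le_max lexx lead_coefN hornerN => /(_ isT).
have := p_ge0 t; rewrite le_max lexx orbT => /(_ isT).
lra.
Qed.

Lemma halfline_nonneg_bounded_size x c :
  halfline_nonneg x -> halfline_nonneg (c%:P - x) -> (size x <= 1)%N.
Proof.
move=> x_ge0 cx_ge0; rewrite leqNgt; apply/negP => x_gt1.
have x_neq0 : x != 0 by rewrite -size_poly_gt0 (ltn_trans _ x_gt1).
have lcE : lead_coef (c%:P - x) = - lead_coef x.
  rewrite addrC lead_coefDl ?lead_coefN // size_polyN.
  exact: leq_ltn_trans (size_polyC_leq1 c) x_gt1.
have cx_neq0 : c%:P - x != 0.
  by rewrite -lead_coef_eq0 lcE oppr_eq0 lead_coef_eq0.
have := halfline_nonneg_lead_coef_gt0 cx_ge0 cx_neq0.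
have := halfline_nonneg_lead_coef_gt0 x_ge0 x_neq0.
rewrite lcE; lra.
Qed.

Lemma halfline_pos_lower_bound p : (forall t, 0 <= t -> 0 < p.[t]) ->
  exists2 m, 0 < m & forall t, 0 <= t -> m <= p.[t].
Proof.
move=> p_gt0.
have p_neq0 : p != 0 by apply: contraTneq (p_gt0 0 (lexx 0)) => ->; rewrite horner0 ltxx.
have lc_gt0 : 0 < lead_coef p.
  by apply: halfline_nonneg_lead_coef_gt0 => // t /p_gt0 /ltW.
have [n Hn] := poly_pinfty_gt_lc lc_gt0.
pose b := Num.max n 0.
have b_ge0 : 0 <= b by rewrite le_max lexx orbT.
have [c cb Hc] := EVT_min b_ge0 (continuous_subspaceT (@continuous_horner R p)).
have c_ge0 : 0 <= c by move: cb; rewrite in_itv /= => /andP[].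
exists (Num.min p.[c] (lead_coef p)); first by rewrite lt_min lc_gt0 p_gt0.
move=> t t_ge0; rewrite ge_min; case: (lerP t b) => tb.
  by rewrite Hc // in_itv /= t_ge0 tb.
by rewrite Hn ?orbT // (le_trans _ (ltW tb)) // le_max lexx.
Qed.

(* [f] is the factor that a polynomial nonnegative on [0, +oo) must contain
   as soon as it vanishes at [l]: ['X] for [l = 0], [('X - l)^2] for [l > 0]. *)
Definition root_factor f l :=
  [/\ 0 <= l, root f l, forall t, 0 <= t -> t != l -> 0 < f.[t]
    & forall h, halfline_nonneg h -> root h l -> f %| h].

Lemma root_factorX : root_factor 'X 0.
Proof.
split=> [||t t_ge0 t_neq0|h _ h0]; rewrite ?lexx ?rootX ?hornerX ?lt_def ?t_neq0 //.
by apply/dvdpP; have /factor_theorem[g ->] := h0; exists g; rewrite subr0.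
Qed.

Lemma root_factor_sqr l : 0 < l -> root_factor (('X - l%:P) ^+ 2) l.
Proof.
move=> l_gt0; split=> [||t _ tl|h h_ge0 hl].
- exact: ltW.
- by rewrite /root horner_exp hornerXsubC subrr expr0n.
- by rewrite horner_exp hornerXsubC exprn_even_gt0 //= subr_eq0.
have /factor_theorem[g hE] := hl.
suff /factor_theorem[g' gE] : root g l by rewrite hE gE -mulrA -expr2 dvdp_mull.
have g_ge0 t : 0 <= t -> 0 <= g.[t] * (t - l) by move/h_ge0; rewrite hE !hornerE.
(* [g] is nonpositive just left of [l] and nonnegative just right of it. *)
apply/eqP/le_anti/andP; split.
  apply: horner_le0_at_left; near=> t.
  have t_lt_l : t < l by near: t; exact: nbhs_left_lt.
  have t_gt0 : 0 < t by near: t; exact: nbhs_left_gt.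
  by rewrite -(nmulr_lge0 _ (_ : t - l < 0)) ?g_ge0 ?ltW // subr_lt0.
apply: horner_ge0_at_right; near=> t.
have l_lt_t : l < t by near: t; exact: nbhs_right_gt.
have t_ge0 : 0 <= t by rewrite (le_trans (ltW l_gt0) (ltW l_lt_t)).
by rewrite -(pmulr_lge0 _ (_ : 0 < t - l)) ?g_ge0 // subr_gt0.
Unshelve. all: by end_near.
Qed.

Section RootFactor.
Variables (f : {poly R}) (l : R).
Hypothesis rf : root_factor f l.

Lemma root_factor_neq0 : f != 0.
Proof.
case: rf => l_ge0 _ f_gt0 _; apply: contraTneq (f_gt0 (l + 1) _ _) => [->||].
- by rewrite horner0 ltxx.
- by rewrite addr_ge0.
- by rewrite gt_eqF // ltrDl.
Qed.

Lemma root_factor_size : (1 < size f)%N.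
Proof. by case: rf => _ fl _ _; exact: root_size_gt1 root_factor_neq0 fl. Qed.

Lemma root_factor_nonneg : halfline_nonneg f.
Proof.
case: rf => _ /eqP fl f_gt0 _ t t_ge0.
by have [->|/(f_gt0 t t_ge0)/ltW//] := eqVneq t l; rewrite fl.
Qed.

Lemma root_factor_divr h : halfline_nonneg h -> root h l ->
  exists2 g, h = g * f & halfline_nonneg g.
Proof.
case: rf => l_ge0 _ f_gt0 f_dvd h_ge0 hl.
have /dvdpP[g hE] := f_dvd h h_ge0 hl.
by exists g => //; apply: halfline_nonneg_divr l_ge0 f_gt0 _; rewrite -hE.
Qed.

Lemma root_factor_peel Q x : halfline_nonneg x -> halfline_nonneg (Q * f - x) ->
  exists x1, [/\ x = x1 * f, halfline_nonneg x1 & halfline_nonneg (Q - x1)].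
Proof.
move=> x_ge0 Qfx_ge0; case: (rf) => l_ge0 /eqP fl f_gt0 _.
have xl : root x l.
  apply/eqP/le_anti; rewrite x_ge0 // andbT.
  by have := Qfx_ge0 l l_ge0; rewrite !hornerE fl mulr0 sub0r oppr_ge0.
have [x1 xE x1_ge0] := root_factor_divr x_ge0 xl.
exists x1; split=> //; apply: halfline_nonneg_divr l_ge0 f_gt0 _.
by rewrite mulrBl -xE.
Qed.

End RootFactor.

Lemma root_factors_peel (fs : seq {poly R}) Q x :
    {in fs, forall f, exists l, root_factor f l} ->
    halfline_nonneg x -> halfline_nonneg (Q * \prod_(f <- fs) f - x) ->
  exists x1, [/\ x = x1 * \prod_(f <- fs) f, halfline_nonneg x1
                & halfline_nonneg (Q - x1)].
Proof.
elim: fs x => [|f fs IH] x rfs x_ge0 Qx_ge0.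
  by exists x; rewrite big_nil mulr1 in Qx_ge0; split; rewrite ?big_nil ?mulr1.
have [l rf] := rfs f (mem_head f fs).
rewrite big_cons mulrCA mulrC in Qx_ge0.
have [x1 [xE x1_ge0 Qx1_ge0]] := root_factor_peel rf x_ge0 Qx_ge0.
have rfs' : {in fs, forall f, exists l, root_factor f l}.
  by move=> g g_fs; apply: rfs; rewrite inE g_fs orbT.
have [x2 [x1E x2_ge0 Qx2_ge0]] := IH x1 rfs' x1_ge0 Qx1_ge0.
by exists x2; split; rewrite // xE x1E big_cons mulrAC mulrA.
Qed.

Lemma root_factors_dominated (fs : seq {poly R}) c x :
    {in fs, forall f, exists l, root_factor f l} ->
    halfline_nonneg x -> halfline_nonneg (c *: \prod_(f <- fs) f - x) ->
  exists2 d, 0 <= d & x = d *: \prod_(f <- fs) f.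
Proof.
move=> rfs x_ge0; rewrite -mul_polyC => cx_ge0.
have [x1 [-> x1_ge0 cx1_ge0]] := root_factors_peel rfs x_ge0 cx_ge0.
have /size1_polyC x1E := halfline_nonneg_bounded_size x1_ge0 cx1_ge0.
exists x1`_0; last by rewrite {1}x1E mul_polyC.
by rewrite -horner_coef0 x1_ge0.
Qed.

Definition rigid P :=
  forall D, halfline_nonneg (P + D) -> halfline_nonneg (P - D) -> exists c, D = c *: P.

Lemma rigid_divr g q : q != 0 -> halfline_nonneg q -> rigid (g * q) -> rigid g.
Proof.
move=> q_neq0 q_ge0 gq_rigid D gD_ge0 gmD_ge0.
have [|t t_ge0|c Dq] := gq_rigid (D * q).
- by move=> t t_ge0; rewrite -mulrDl hornerM mulr_ge0 ?gD_ge0 ?q_ge0.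
- by rewrite -mulrBl hornerM mulr_ge0 ?gmD_ge0 ?q_ge0.
by exists c; apply: (mulIf q_neq0); rewrite Dq scalerAl.
Qed.

Lemma rigid_root_factor P f l : P != 0 -> halfline_nonneg P -> rigid P ->
    root P l -> root_factor f l ->
  exists g, [/\ P = g * f, g != 0, halfline_nonneg g, rigid g & (size g < size P)%N].
Proof.
move=> P_neq0 P_ge0 P_rigid Pl rf.
have [g PE g_ge0] := root_factor_divr rf P_ge0 Pl.
have f_neq0 := root_factor_neq0 rf.
have g_neq0 : g != 0 by apply: contra_neq P_neq0 => g0; rewrite PE g0 mul0r.
exists g; split=> //.
  by apply: rigid_divr f_neq0 (root_factor_nonneg rf) _; rewrite -PE.
have := root_factor_size rf; rewrite PE size_mul //.
by case: (size f) => [|[|k]] // _; rewrite !addnS ltnS leq_addr.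
Qed.

Lemma rigid_halfline_pos P : (forall t, 0 <= t -> 0 < P.[t]) -> rigid P ->
  exists2 c, 0 < c & P = c%:P.
Proof.
move=> P_gt0 P_rigid; have [m m_gt0 Pm] := halfline_pos_lower_bound P_gt0.
have [||c mE] := P_rigid m%:P.
- by move=> t t_ge0; rewrite !hornerE addr_ge0 ?ltW ?P_gt0.
- by move=> t t_ge0; rewrite !hornerE subr_ge0 Pm.
have c_neq0 : c != 0.
  apply: contraTneq m_gt0 => c0; move/eqP: mE.
  by rewrite c0 scale0r polyC_eq0 => /eqP->; rewrite ltxx.
have PE : P = (c^-1 * m)%:P by rewrite -scale_polyC mE scalerA mulVf ?scale1r.
by exists (c^-1 * m) => //; have := P_gt0 0 (lexx 0); rewrite PE hornerC.
Qed.

Lemma rigid_structure P : P != 0 -> halfline_nonneg P -> rigid P ->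
  exists k (s : seq R) c, [/\ 0 < c, {in s, forall l, 0 < l}
    & P = c *: ('X^k * \prod_(l <- s) ('X - l%:P) ^+ 2)].
Proof.
have [n] := ubnP (size P); elim: n P => // n IH P /ltnSE P_size P_neq0 P_ge0 P_rigid.
have [P0|P0_neq0] := boolP (root P 0).
  have [g [PE g_neq0 g_ge0 g_rigid /leq_trans/(_ P_size) g_size]] :=
    rigid_root_factor P_neq0 P_ge0 P_rigid P0 root_factorX.
  have [k [s [c [c_gt0 s_gt0 gE]]]] := IH g g_size g_neq0 g_ge0 g_rigid.
  by exists k.+1, s, c; split; rewrite // PE gE -!mul_polyC exprSr; ring.
have [[l [l_gt0 Pl]]|P_noroot] := pselect (exists l, 0 < l /\ root P l).
  have [g [PE g_neq0 g_ge0 g_rigid /leq_trans/(_ P_size) g_size]] :=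
    rigid_root_factor P_neq0 P_ge0 P_rigid Pl (root_factor_sqr l_gt0).
  have [k [s [c [c_gt0 s_gt0 gE]]]] := IH g g_size g_neq0 g_ge0 g_rigid.
  exists k, (l :: s), c; split=> //; last by rewrite PE gE big_cons -!mul_polyC; ring.
  by move=> l'; rewrite inE => /predU1P[->|/s_gt0].
have P_gt0 t : 0 <= t -> 0 < P.[t].
  move=> t_ge0; rewrite lt_def P_ge0 // andbT.
  have [<-|t_neq0] := eqVneq 0 t; first exact: P0_neq0.
  apply/eqP => Pt; apply: P_noroot; exists t.
  by rewrite lt_def eq_sym t_neq0 t_ge0 /root Pt.
have [c c_gt0 PE] := rigid_halfline_pos P_gt0 P_rigid.
by exists 0%N, [::], c; rewrite big_nil expr0 mulr1 alg_polyC.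
Qed.

Lemma laplace2_integrand_measurable p :
  measurable_fun (`[0%R, +oo[ : set R) (fun t : R => (p.[t] * expR (- (2 * t)))%:E).
Proof.
apply/measurable_EFinP; apply: measurable_funTS.
apply: continuous_measurable_fun => t; apply: continuousM.
  exact: continuous_horner.
apply: continuous_comp; last exact: continuous_expR.
by apply: continuousN; apply: continuousM; [exact: cvg_cst | exact: cvg_id].
Qed.

Lemma laplace2_integrand_ge0 p : halfline_nonneg p ->
  forall t, (`[0%R, +oo[ : set R) t -> (0 <= (p.[t] * expR (- (2 * t)))%:E)%E.
Proof.
move=> p_ge0 t; rewrite /= in_itv /= andbT => t_ge0.
by rewrite lee_fin mulr_ge0 ?expR_ge0 ?p_ge0.
Qed.

Lemma laplace2_ge0 p : halfline_nonneg p -> (0 <= laplace2 p)%E.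
Proof. by move=> p_ge0; apply: integral_ge0; exact: laplace2_integrand_ge0. Qed.

Lemma laplace2_add p q : halfline_nonneg p -> halfline_nonneg q ->
  laplace2 (p + q) = (laplace2 p + laplace2 q)%E.
Proof.
move=> p_ge0 q_ge0; rewrite /laplace2.
under eq_integral => t _ do rewrite hornerD mulrDl EFinD.
by apply: ge0_integralD; rewrite //;
  solve [exact: laplace2_integrand_ge0 | exact: laplace2_integrand_measurable].
Qed.

Lemma laplace2_scale a p : 0 <= a -> halfline_nonneg p ->
  laplace2 (a *: p) = (a%:E * laplace2 p)%E.
Proof.
move=> a_ge0 p_ge0; rewrite /laplace2.
under eq_integral => t _ do rewrite hornerZ -mulrA EFinM.
apply: ge0_integralZl_EFin => //; first exact: laplace2_integrand_ge0.
exact: laplace2_integrand_measurable.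
Qed.

Lemma laplace2_conic a b p q : 0 <= a -> 0 <= b ->
    halfline_nonneg p -> halfline_nonneg q ->
  laplace2 (a *: p + b *: q) = (a%:E * laplace2 p + b%:E * laplace2 q)%E.
Proof.
move=> a_ge0 b_ge0 p_ge0 q_ge0.
by rewrite laplace2_add ?laplace2_scale //; apply: halfline_nonnegZ.
Qed.

Lemma laplace2_addE p q b : halfline_nonneg p -> halfline_nonneg q ->
    laplace2 (p + q) = b%:E ->
  exists a, [/\ laplace2 p = a%:E, laplace2 q = (b - a)%:E, 0 <= a & a <= b].
Proof.
move=> p_ge0 q_ge0; rewrite laplace2_add // => Lpq.
have /andP[/fineK Lp /fineK Lq] :
    (laplace2 p \is a fin_num) && (laplace2 q \is a fin_num).
  by rewrite -fin_numD Lpq.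
exists (fine (laplace2 p)); split=> //.
- by move: Lpq; rewrite -Lp -Lq -EFinD => -[<-]; rewrite -Lq addrC addKr.
- by rewrite -lee_fin Lp laplace2_ge0.
move: (laplace2_ge0 q_ge0) Lpq; rewrite -Lp -Lq -EFinD lee_fin => ? -[<-].
by rewrite lerDl.
Qed.

Lemma Pset_neq0 P : Pset R P -> P != 0.
Proof.
move=> LP; apply/eqP => P0; move: LP; rewrite /Pset /= P0 /laplace2.
under eq_integral => t _ do rewrite horner0 mul0r.
by rewrite integral0 => -[] /esym/eqP; rewrite oner_eq0.
Qed.

Lemma Pset_scale_eq1 P a : Pset R P -> halfline_nonneg P -> 0 <= a ->
  Pset R (a *: P) -> a = 1.
Proof.
by move=> LP P_ge0 a_ge0; rewrite /Pset /= laplace2_scale // LP mule1 => -[].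
Qed.

Lemma extreme_point_rigid P : extreme_point (Pplus R) P -> rigid P.
Proof.
move=> [[LP P_ge0] P_ext] D PD_ge0 PmD_ge0.
have L2 : laplace2 ((P + D) + (P - D)) = 2%:E.
  by rewrite addrACA subrr addr0 -mulr2n -scaler_nat laplace2_scale // LP mule1.
have [a [La Lb a_ge0 a_le2]] := laplace2_addE PD_ge0 PmD_ge0 L2.
have [c1_ge0 c2_ge0 half_ge0] : [/\ 0 <= 1 - a / 2, 0 <= a / 2 & 0 <= 2^-1 :> R].
  by split; lra.
(* [x] and [y] are [P +- (D - (a - 1) P) / 2], and [a - 1] is the integral of [D]. *)
pose x := (1 - a / 2) *: P + 2^-1 *: (P + D).
pose y := (a / 2) *: P + 2^-1 *: (P - D).
have Px : Pplus R x.
  split; last by apply: halfline_nonnegD; apply: halfline_nonnegZ.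
  rewrite /Pset /= laplace2_conic // LP La mule1 -EFinM -EFinD.
  by congr EFin; lra.
have Py : Pplus R y.
  split; last by apply: halfline_nonnegD; apply: halfline_nonnegZ.
  rewrite /Pset /= laplace2_conic // LP Lb mule1 -EFinM -EFinD.
  by congr EFin; lra.
have Pxy : P = 2^-1 *: (x + y).
  by apply/polyP => i; rewrite /x /y !coefE; field.
have [xP _] := P_ext x y Px Py Pxy.
exists (a - 1); apply/polyP => i.
by move: (congr1 (coefp i) xP); rewrite /= /x !coefE; lra.
Qed.

Lemma extreme_point_root_factors (fs : seq {poly R}) c : 0 < c ->
    {in fs, forall f, exists l, root_factor f l} ->
    Pplus R (c *: \prod_(f <- fs) f) ->
  extreme_point (Pplus R) (c *: \prod_(f <- fs) f).
Proof.
set F := \prod_(f <- fs) f => c_gt0 rfs PP; split=> // x y [Lx x_ge0] [_ y_ge0] Pxy.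
have [LP P_ge0] := PP.
have yE : y = 2 *: (c *: F) - x.
  by rewrite Pxy scalerA mulfV ?pnatr_eq0 // scale1r addrC addKr.
have [d d_ge0 xE] : exists2 d, 0 <= d & x = d *: F.
  by apply: (root_factors_dominated (c := 2 * c)) rfs x_ge0 _; rewrite -scalerA -yE.
have xE' : x = (d / c) *: (c *: F) by rewrite xE scalerA mulfVK ?gt_eqF.
have dc : d / c = 1.
  by apply: Pset_scale_eq1 LP P_ge0 (divr_ge0 d_ge0 (ltW c_gt0)) _; rewrite -xE'.
have xP : x = c *: F by rewrite xE' dc scale1r.
by split=> //; rewrite yE xP scaler_nat mulr2n addrK.
Qed.

End HalflinePolynomials.

Theorem lemma9 (R : realType) (P : {poly R}) :
  Pplus R P ->
  (extreme_point (Pplus R) P <->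
   exists (k l : nat) (lam : 'I_l -> R) (c : R),
     0 < c /\ (forall i, 0 < lam i) /\
     P = c *: ('X^k * \prod_(i < l) ('X - (lam i)%:P) ^+ 2)).
Proof.
move=> PP; split=> [P_ext|[k [l [lam [c [c_gt0 [lam_gt0 PE]]]]]]].
  have [k [s [c [c_gt0 s_gt0 PE]]]] :=
    rigid_structure (Pset_neq0 PP.1) PP.2 (extreme_point_rigid P_ext).
  exists k, (size s), (nth 0 s), c; split=> //; split.
    by move=> i; apply/s_gt0/mem_nth.
  by rewrite PE (big_nth 0) big_mkord.
pose fs := nseq k 'X ++ [seq ('X - (lam i)%:P) ^+ 2 | i <- index_enum 'I_l].
have prodE : \prod_(f <- fs) f = 'X^k * \prod_(i < l) ('X - (lam i)%:P) ^+ 2.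
  by rewrite big_cat big_nseq iter_mulr_1 big_map.
have rfs : {in fs, forall f, exists l, root_factor f l}.
  move=> f; rewrite mem_cat mem_nseq => /orP[/andP[_ /eqP->]|/mapP[i _ ->]].
    by exists 0; exact: root_factorX.
  by exists (lam i); exact: root_factor_sqr.
by rewrite PE -prodE; apply: extreme_point_root_factors c_gt0 rfs _; rewrite prodE -PE.
Qed.
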